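(* Let $\psi^\infty:[0,\infty)\to X$ be a bounded, differentiable solution of the conventional adjoint equation $$\frac{d\psi^\infty}{dt} + f_u^*(t)\,\psi^\infty + J_u(t) = 0,$$ which moreover satisfies $\lim_{T\to\infty}\frac{1}{T}\int_0^T \psi^\infty(t)^T f(t)\,dt = 0$. Then $$\psi^\infty(t)^T f(t) = \bar J - J(t)\qquad\text{for all } t\ge 0 .$$
   Context: Let $X=\mathbb{R}^n$ with inner product $x^Ty$. Let $f:X\times\mathbb{R}\to X$ be $C^2$, fix the parameter $s\in\mathbb{R}$, and let $u(t)$, $t\ge 0$, solve $\frac{du}{dt}=f(u,s)$. Write $f(t)=f(u(t),s)$, let $f_u(t)$ be the Jacobian $\partial f/\partial u$ at $(u(t),s)$, and let $f_u^*(t)=f_u(t)^T$. Let $J:X\times\mathbb{R}\to\mathbb{R}$ be smooth, with $J(t)=J(u(t),s)$ and $J_u(t)$ the gradient of $J$ with respect to $u$ at $(u(t),s)$, written as a column vector. Let $\bar J=\lim_{T\to\infty}\frac1T\int_0^T J(t)\,dt$, assumed to exist. *)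

From mathcomp Require Import all_boot all_order all_algebra.
From mathcomp Require Import all_classical all_reals all_analysis.
Import numFieldNormedType.Exports.
Import Order.TTheory GRing.Theory Num.Theory.

Set Implicit Arguments.
Unset Strict Implicit.
Unset Printing Implicit Defensive.

Local Open Scope classical_set_scope.
Local Open Scope ring_scope.

(* C^k regularity: C^0 = continuous; C^(k+1) = differentiable everywhere with
   every directional derivative x |-> 'D_v g x of class C^k
   (in finite dimension this is the usual notion of C^k). *)
Fixpoint Ck {R : realType} {V W : normedModType R} (k : nat) (g : V -> W) : Prop :=
  match k with
  | 0 => continuous g
  | k'.+1 => (forall x, differentiable g x) /\ (forall v, Ck k' (fun x => 'D_v g x))
  end.

Definition smooth {R : realType} {V W : normedModType R} (g : V -> W) : Prop :=
  forall k, Ck k g.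

Definition dot {R : realType} {n : nat} (x y : 'rV[R]_n) : R :=
  \sum_(i < n) x 0 i * y 0 i.

Definition grad {R : realType} {n : nat} (g : 'rV[R]_n -> R) (x : 'rV[R]_n) : 'rV[R]_n :=
  \row_i ('d g x (delta_mx 0 i : 'rV[R]_n)).

(* With the row-vector convention of the library, h *m 'J g x = 'd g x h, so
   the adjoint w.r.t. the standard inner product is w |-> w *m ('J g x)^T. *)
Definition jac_adj {R : realType} {n : nat} (g : 'rV[R]_n -> 'rV[R]_n)
  (x w : 'rV[R]_n) : 'rV[R]_n :=
  w *m ('J g x)^T.

Definition deriv_on_Ici {R : realType} {n : nat} (y y' : R -> 'rV[R]_n) : Prop :=
  (forall t : R, 0 < t -> is_derive t 1 y (y' t)) /\
  ((fun h : R => h^-1 *: (y h - y 0)) @ 0^'+ --> y' 0).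

Definition avg {R : realType} (g : R -> R) (T : R) : R :=
  T^-1 * \int[@lebesgue_measure R]_(t in `[0, T]) g t.

From mathcomp Require Import all_boot all_order all_algebra.
From mathcomp Require Import all_classical all_reals all_analysis.
Import numFieldNormedType.Exports.
Import Order.TTheory GRing.Theory Num.Theory.
Local Open Scope classical_set_scope.
Local Open Scope ring_scope.

(* The adjoint equation is exactly what makes Phi(t) := psi(t)^T f(t) + J(t)
   a first integral: d/dt (psi^T f) = psi'^T f + psi^T f_u f
   = -(f_u^* psi + J_u)^T f + psi^T f_u f = -J_u^T f = -dJ/dt.
   Hence Phi is a constant c on [0, oo), and averaging psi^T f = c - J over
   [0, T] and letting T -> oo gives 0 = c - Jbar. *)

Lemma is_derive_diff_comp {R : realType} {V W : normedModType R}
    {g : V -> W} {y : R -> V} {t : R} {y' : V} :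
  is_derive t 1 y y' -> differentiable g (y t) ->
  is_derive t 1 (g \o y) ('d g (y t) y').
Proof.
move=> dy dg.
have dyt : differentiable y t by apply/derivable1_diffP; exact: ex_derive.
have dgy : differentiable (g \o y) t by exact: differentiable_comp.
apply: DeriveDef; first exact/derivable1_diffP.
by rewrite deriveE // diff_comp //= -(@deriveE _ _ _ y t 1 dyt) derive_val.
Qed.

Lemma differentiable_slice {R : realType} {U V W : normedModType R}
    (g : U * V -> W) (b : V) (a : U) :
  differentiable g (a, b) -> differentiable (fun x => g (x, b)) a.
Proof.
move=> dg; change (differentiable (g \o (fun x => (x, b))) a).
by apply: differentiable_comp => //; exact: differentiable_pair.
Qed.

Lemma deriv_on_Ici_cvg_right {R : realType} {n} {y y' : R -> 'rV[R]_n} :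
  deriv_on_Ici y y' -> y @ 0^'+ --> y 0.
Proof.
move=> [_ dy0].
have : (fun h : R => h *: (h^-1 *: (y h - y 0)) + y 0) @ 0^'+ --> 0 *: y' 0 + y 0.
  apply: cvgD; last exact: cvg_cst.
  by apply: cvgZ => //; exact: cvg_at_right_filter cvg_id.
rewrite scale0r add0r; apply: cvg_trans; apply: near_eq_cvg; near=> h.
by rewrite scalerA divff ?scale1r ?subrK.
Unshelve. all: by end_near.
Qed.

Lemma continuous_within_itv0_right {R : realType} {g : R -> R} {T : R} :
  (forall x : R, 0 < x -> derivable g x 1) -> g @ 0^'+ --> g 0 ->
  {within `[0, T], continuous g}.
Proof.
move=> dg g0; have [T0|] := ltP 0 T; last first.
  rewrite le_eqVlt => /predU1P[->|T0].
    by rewrite set_itv1; exact: continuous_subspace1.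
  by rewrite set_itv_ge ?bnd_simp -?ltNge //; exact: continuous_subspace0.
apply/continuous_within_itvP => //; split => //.
- move=> x; rewrite in_itv /= => /andP[x0 _].
  exact/differentiable_continuous/derivable1_diffP/dg.
- apply: cvg_at_left_filter.
  exact/differentiable_continuous/derivable1_diffP/dg.
Qed.

Lemma derive0_const_Ici {R : realType} (g : R -> R) :
  (forall x : R, 0 < x -> is_derive x 1 g 0) -> g @ 0^'+ --> g 0 ->
  forall x : R, 0 <= x -> g x = g 0.
Proof.
move=> dg g0 x; rewrite le_eqVlt => /predU1P[<-//|x0].
have dg' (y : R) : 0 < y -> derivable g y 1 by move=> /dg dgy; exact: ex_derive.
have [c _] := MVT x0 (fun y yI => dg y (andP yI).1)
  (continuous_within_itv0_right (T:=x) dg' g0).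
by rewrite mul0r => /eqP; rewrite subr_eq0 => /eqP.
Qed.

Lemma dotBl {R : realType} n (a b c : 'rV[R]_n) :
  dot (a - b) c = dot a c - dot b c.
Proof. by rewrite /dot -sumrB; apply: eq_bigr => i _; rewrite !mxE mulrBl. Qed.

Lemma dotNl {R : realType} n (a c : 'rV[R]_n) : dot (- a) c = - dot a c.
Proof. by rewrite /dot -sumrN; apply: eq_bigr => i _; rewrite !mxE mulNr. Qed.

Lemma dot_mulmx {R : realType} n (p h : 'rV[R]_n) (M : 'M[R]_n) :
  dot p (h *m M) = dot (p *m M^T) h.
Proof.
rewrite /dot.
under eq_bigr do rewrite mxE mulr_sumr.
under [RHS]eq_bigr do rewrite mxE mulr_suml.
rewrite exchange_big /=; apply: eq_bigr => i _; apply: eq_bigr => j _.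
by rewrite !mxE mulrCA mulrC.
Qed.

Lemma dot_grad {R : realType} n (g : 'rV[R]_n -> R) (x h : 'rV[R]_n) :
  dot (grad g x) h = 'd g x h.
Proof.
have delta_coord (k i : 'I_n) : (delta_mx 0 i : 'rV[R]_n) 0 k = (k == i)%:R.
  by rewrite mxE eqxx.
have -> : h = \sum_(i < n) h 0 i *: (delta_mx 0 i : 'rV[R]_n).
  apply/rowP => j; rewrite summxE (bigD1 j) //= big1 ?addr0.
    by rewrite mxE delta_coord eqxx mulr1.
  by move=> k kj; rewrite mxE delta_coord eq_sym (negbTE kj) mulr0.
rewrite linear_sum /dot; apply: eq_bigr => i _.
rewrite linearZ /= mxE mulrC; congr (_ * _).
rewrite summxE (bigD1 i) //= big1 ?addr0.
  by rewrite mxE delta_coord eqxx mulr1.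
by move=> k ki; rewrite mxE delta_coord eq_sym (negbTE ki) mulr0.
Qed.

Lemma is_derive_coord {R : realType} n (a : R -> 'rV[R]_n) (t : R)
    (a' : 'rV[R]_n) (i : 'I_n) :
  is_derive t 1 a a' -> is_derive t 1 (fun r => a r 0 i) (a' 0 i).
Proof.
move=> da; have dat : derivable a t 1 by exact: ex_derive.
have /derivable_mxP/(_ 0 i) dai := dat.
have Da : 'D_1 a t = a' by exact: derive_val.
by apply: DeriveDef => //; rewrite -Da derive_mx // mxE.
Qed.

Lemma is_derive_dot {R : realType} {n} {a b : R -> 'rV[R]_n} {t : R}
    {a' b' : 'rV[R]_n} :
  is_derive t 1 a a' -> is_derive t 1 b b' ->
  is_derive t 1 (fun r => dot (a r) (b r)) (dot a' (b t) + dot (a t) b').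
Proof.
move=> da db.
have -> : (fun r => dot (a r) (b r)) =
    \sum_(i < n) ((fun r => a r 0 i) * (fun r => b r 0 i)).
  by apply/funext => r; rewrite fct_sumE.
have -> : dot a' (b t) + dot (a t) b' =
    \sum_(i < n) (a t 0 i *: b' 0 i + b t 0 i *: a' 0 i).
  rewrite /dot -big_split /=; apply: eq_bigr => i _.
  by rewrite addrC [a' 0 i * _]mulrC.
by apply: is_derive_sum => i; apply: is_deriveM; exact: is_derive_coord.
Qed.

Lemma cvg_dot {R : realType} n (T : Type) (F : set_system T) {FF : Filter F}
    (a b : T -> 'rV[R]_n) (a0 b0 : 'rV[R]_n) :
  a @ F --> a0 -> b @ F --> b0 -> (fun x => dot (a x) (b x)) @ F --> dot a0 b0.
Proof.
move=> aF bF; apply: cvg_big => [|i _]; first exact: add_continuous.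
apply: cvgM.
- exact: cvg_comp aF (@coord_continuous _ _ _ 0 i a0).
- exact: cvg_comp bF (@coord_continuous _ _ _ 0 i b0).
Qed.

Lemma dot_adjoint_rhs {R : realType} n (F : 'rV[R]_n -> 'rV[R]_n)
    (G : 'rV[R]_n -> R) (x p v : 'rV[R]_n) :
  dot (- jac_adj F x p - grad G x) v + dot p ('d F x v) + 'd G x v = 0.
Proof.
have dF_jacobian : 'd F x v = v *m 'J F x by rewrite /jacobian mul_rV_lin1.
rewrite dF_jacobian dot_mulmx dotBl dotNl dot_grad /jac_adj.
by rewrite addrAC subrK addNr.
Qed.

Lemma avg_eq_Ici {R : realType} (g h : R -> R) :
  (forall t, 0 <= t -> g t = h t) -> forall T, avg g T = avg h T.
Proof.
move=> gh T; congr (_ * _); apply: eq_Rintegral => t.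
by rewrite inE /= in_itv /= => /andP[t0 _]; exact: gh.
Qed.

Lemma avg_subl {R : realType} (c : R) (g : R -> R) (T : R) :
  0 < T -> {within `[0, T], continuous g} ->
  avg (fun t => c - g t) T = c - avg g T.
Proof.
move=> T0 gc; rewrite /avg RintegralB //; first last.
- by apply: continuous_compact_integrable; first exact: segment_compact.
- apply: continuous_compact_integrable; first exact: segment_compact.
  by move=> ?; exact: cvg_cst.
rewrite Rintegral_cst //.
have -> : fine (@lebesgue_measure R `[0, T]%classic) = T.
  by rewrite lebesgue_measure_itv /= lte_fin T0 /= subr0.
by rewrite mulrBr mulrCA mulVf ?mulr1 // gt_eqF.
Qed.

Section adjoint_first_integral.
Context {R : realType} {n : nat}.
Context {F : 'rV[R]_n -> 'rV[R]_n} {G : 'rV[R]_n -> R} {u psi : R -> 'rV[R]_n}.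
Hypotheses (dF : forall v, differentiable F v) (dG : forall v, differentiable G v).
Hypothesis u_sol : deriv_on_Ici u (fun t => F (u t)).
Hypothesis psi_adj :
  deriv_on_Ici psi (fun t => - jac_adj F (u t) (psi t) - grad G (u t)).

Definition adjoint_invariant (t : R) : R := dot (psi t) (F (u t)) + G (u t).

Lemma is_derive_Gu {t : R} :
  0 < t -> is_derive t 1 (G \o u) ('d G (u t) (F (u t))).
Proof. by move=> t0; exact: is_derive_diff_comp (u_sol.1 t t0) (dG (u t)). Qed.

Lemma is_derive_adjoint_invariant (t : R) :
  0 < t -> is_derive t 1 adjoint_invariant 0.
Proof.
move=> t0.
have dFu := is_derive_diff_comp (u_sol.1 t t0) (dF (u t)).
have := is_deriveD (is_derive_dot (psi_adj.1 t t0) dFu) (is_derive_Gu t0).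
by rewrite /= dot_adjoint_rhs.
Qed.

Lemma cvg_right_Gu : (G \o u) @ 0^'+ --> G (u 0).
Proof.
exact: cvg_comp _ _ (deriv_on_Ici_cvg_right u_sol)
  (differentiable_continuous (dG (u 0))).
Qed.

Lemma adjoint_invariant_const {t : R} :
  0 <= t -> adjoint_invariant t = adjoint_invariant 0.
Proof.
apply: derive0_const_Ici; first exact: is_derive_adjoint_invariant.
apply: cvgD cvg_right_Gu; apply: cvg_dot.
- exact: deriv_on_Ici_cvg_right psi_adj.
- exact: cvg_comp _ _ (deriv_on_Ici_cvg_right u_sol)
    (differentiable_continuous (dF (u 0))).
Qed.

Lemma avg_dot_field (T : R) : 0 < T ->
  avg (fun t => dot (psi t) (F (u t))) T = adjoint_invariant 0 - avg (G \o u) T.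
Proof.
move=> T0; rewrite -avg_subl //; last first.
  apply: continuous_within_itv0_right cvg_right_Gu => t t0.
  have Gu' := is_derive_Gu t0; exact: ex_derive.
by apply: avg_eq_Ici => t t0; rewrite -(adjoint_invariant_const t0) addrK.
Qed.

Lemma adjoint_invariant_avg {Jbar : R} :
  avg (G \o u) T @[T --> +oo] --> Jbar ->
  avg (fun t => dot (psi t) (F (u t))) T @[T --> +oo] --> 0 ->
  adjoint_invariant 0 = Jbar.
Proof.
move=> GuJ avg0.
have avgJbar : avg (fun t => dot (psi t) (F (u t))) T @[T --> +oo] -->
    adjoint_invariant 0 - Jbar.
  apply: cvg_trans (cvgB (cvg_cst (adjoint_invariant 0)) GuJ).
  apply: near_eq_cvg; near=> T; rewrite /= avg_dot_field //.
by apply/eqP; rewrite -subr_eq0 (cvg_unique _ avgJbar avg0).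
Unshelve. all: by end_near.
Qed.

End adjoint_first_integral.

Theorem mainTheorem1 (R : realType) (n : nat)
  (f : 'rV[R]_n * R -> 'rV[R]_n) (J : 'rV[R]_n * R -> R) (s : R)
  (u : R -> 'rV[R]_n) (Jbar : R) (psi : R -> 'rV[R]_n) :
  Ck 2 f ->
  smooth J ->
  deriv_on_Ici u (fun t => f (u t, s)) ->
  avg (fun t => J (u t, s)) T @[T --> +oo] --> Jbar ->
  (exists M : R, forall t, 0 <= t -> `|psi t| <= M) ->
  deriv_on_Ici psi (fun t => - jac_adj (fun v => f (v, s)) (u t) (psi t)
                             - grad (fun v => J (v, s)) (u t)) ->
  avg (fun t => dot (psi t) (f (u t, s))) T @[T --> +oo] --> 0 ->
  forall t : R, 0 <= t -> dot (psi t) (f (u t, s)) = Jbar - J (u t, s).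
Proof.
move=> [df _] /(_ 1%N) [dJ _] u_sol Javg _ psi_adj avg0 t t0.
have dfs v : differentiable (fun x => f (x, s)) v by exact: differentiable_slice.
have dJs v : differentiable (fun x => J (x, s)) v by exact: differentiable_slice.
rewrite -(adjoint_invariant_avg dfs dJs u_sol psi_adj Javg avg0).
by rewrite -(adjoint_invariant_const dfs dJs u_sol psi_adj t0) addrK.
Qed.
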